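(* Let $\hat h^\bullet$ be a relative differential extension of a cohomology theory $h^\bullet$ and let $\rho\colon A\to X$ be a smooth map of manifolds. Let $\Omega^\bullet_{\mathrm{ch}}(\rho)\subset\Omega^\bullet_{\mathrm{cl}}(\rho;\mathfrak h^\bullet_{\mathbb R})$ be the subgroup of closed relative forms $(\omega,\eta)$ whose de Rham class $[(\omega,\eta)]\in H^\bullet_{dR}(\rho;\mathfrak h^\bullet_{\mathbb R})$ lies in the image of the Chern character $\mathrm{ch}\colon h^\bullet(\rho)\to H^\bullet_{dR}(\rho;\mathfrak h^\bullet_{\mathbb R})$. Then the image of the curvature $R\colon\hat h^\bullet(\rho)\to\Omega^\bullet_{\mathrm{cl}}(\rho;\mathfrak h^\bullet_{\mathbb R})$ is exactly $\Omega^\bullet_{\mathrm{ch}}(\rho)$; consequently the sequence $$0\to\hat h^\bullet_{\mathrm{fl}}(\rho)\to\hat h^\bullet(\rho)\xrightarrow{R}\Omega^\bullet_{\mathrm{ch}}(\rho)\to 0$$ is exact, where $\hat h^\bullet_{\mathrm{fl}}(\rho)=\ker R$ is the group of flat classes.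
   Context: Let $h^\bullet$ be a cohomology theory defined on continuous maps: for a map $\rho\colon A\to X$, $h^\bullet(\rho)$ is its relative cohomology (the reduced cohomology of the mapping cone), fitting in the long exact sequence $\cdots\to h^n(\rho)\to h^n(X)\xrightarrow{\rho^*}h^n(A)\to h^{n+1}(\rho)\to\cdots$. Put $\mathfrak h^\bullet=h^\bullet(pt)$, $\mathfrak h^\bullet_{\mathbb R}=\mathfrak h^\bullet\otimes_{\mathbb Z}\mathbb R$. Let $\mathcal M_2$ be the category whose objects are smooth maps $\rho\colon A\to X$ between smooth manifolds (possibly with boundary), a morphism from $\eta\colon B\to Y$ to $\rho$ being a pair $(f,g)$ of smooth maps $f\colon Y\to X$, $g\colon B\to A$ with $f\circ\eta=\rho\circ g$. For $\rho\colon A\to X$ set $\Omega^\bullet(\rho;\mathfrak h^\bullet_{\mathbb R})=\Omega^\bullet(X;\mathfrak h^\bullet_{\mathbb R})\oplus\Omega^{\bullet-1}(A;\mathfrak h^\bullet_{\mathbb R})$ (graded by total degree) with differential $d(\omega,\eta)=(d\omega,\rho^*\omega-d\eta)$; its cohomology is $H^\bullet_{dR}(\rho;\mathfrak h^\bullet_{\mathbb R})$, and $\mathrm{ch}$ denotes the relative Chern character of $h^\bullet$. A relative differential extension of $h^\bullet$ is a contravariant functor $\hat h^\bullet$ from $\mathcal M_2$ to graded abelian groups with natural transformations $I\colon\hat h^\bullet(\rho)\to h^\bullet(\rho)$, $R\colon\hat h^\bullet(\rho)\to\Omega^\bullet_{\mathrm{cl}}(\rho;\mathfrak h^\bullet_{\mathbb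 R})$ and $a\colon\Omega^{\bullet-1}(\rho;\mathfrak h^\bullet_{\mathbb R})/\mathrm{Im}(d)\to\hat h^\bullet(\rho)$ such that: (A1) $R\circ a=d$; (A2) the de Rham class of $R(\hat\alpha)$ equals $\mathrm{ch}(I(\hat\alpha))$; (A3) the sequence $h^{\bullet-1}(\rho)\xrightarrow{\mathrm{ch}}\Omega^{\bullet-1}(\rho;\mathfrak h^\bullet_{\mathbb R})/\mathrm{Im}(d)\xrightarrow{a}\hat h^\bullet(\rho)\xrightarrow{I}h^\bullet(\rho)\to0$ is exact; (A4) writing $R=(R',\mathrm{cov})$ for the two components and $\pi$ for the natural morphism from the object $\emptyset\to X$ to $\rho$ (with $\hat h^\bullet(X):=\hat h^\bullet(\emptyset\to X)$), one has $\rho^*\circ\pi^*=a\circ\mathrm{cov}$. A class $\hat\alpha$ is flat if $R(\hat\alpha)=0$. *)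

(* Abstract algebraic model of the data of a relative
   differential extension evaluated at ONE fixed object rho : A -> X of M_2. *)
From HB Require Import structures.
From mathcomp Require Import all_boot all_order all_algebra.


Unset Printing Implicit Defensive.
Import GRing.Theory.
Local Open Scope ring_scope.

(* The cochain complex Omega^n(rho; h_R) (graded by total degree n : int),
   with differential d. *)
Record relComplex := RelComplex {
  Om : int -> zmodType;
  dR : forall n : int, {additive Om n -> Om (n + 1)};
  dRK : forall (n : int) (w : Om n), dR (n + 1) (dR n w) = 0
}.
Arguments dR {r n}.


Definition closedf (C : relComplex) (n : int) (w : Om C n) : Prop :=
  dR w = 0.
Arguments closedf {C n}.

(* w is exact, i.e. w = d b for some b of degree m with m + 1 = n
   (the equation e is used to transport d b from degree m+1 to degree n). *)
Definition exactf (C : relComplex) (n : int) (w : Om C n) : Prop :=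
  exists (m : int) (e : m + 1 = n) (b : Om C m),
    w = eq_rect (m + 1) (fun k => Om C k) (dR b) n e.
Arguments exactf {C n}.

Definition cohomologous (C : relComplex) (n : int) (w w' : Om C n) : Prop :=
  exactf (w - w').
Arguments cohomologous {C n}.

(* A model of the Chern character ch : h^n(rho) -> H^n_dR(rho; h_R):
   it is given by choosing, for each class x, a closed representative
   chrep x of ch(x); only its de Rham class is ever used. *)
Record chernChar (C : relComplex) (h : int -> zmodType) := ChernChar {
  chrep : forall n : int, h n -> Om C n;
  chrep_closed : forall (n : int) (x : h n), closedf (chrep n x)
}.
Arguments chrep {C h}.


(* The data (I, R, a) of a relative differential extension hat h of h,
   evaluated at the fixed object rho, with axioms (A1)-(A3).
   - hh n  = hat h^n(rho), h n = h^n(rho), Om C n = Omega^n(rho; h_R);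
   - a is defined on Omega^{n}(rho)/Im d with values in hat h^{n+1}(rho),
     modelled as a map on Omega^n vanishing on exact forms. *)
Record relDiffExt (C : relComplex) (h : int -> zmodType)
    (ch : chernChar C h) := RelDiffExt {
  hh : int -> zmodType;
  Iop : forall n : int, {additive hh n -> h n};
  Rop : forall n : int, {additive hh n -> Om C n};
  aop : forall n : int, {additive Om C n -> hh (n + 1)};
  Rop_closed : forall (n : int) (x : hh n), closedf (Rop n x);
  (* a is well defined on Omega / Im d *)
  aop_exact : forall (n : int) (w : Om C n), exactf w -> aop n w = 0;
  A1 : forall (n : int) (w : Om C n), Rop (n + 1) (aop n w) = dR w;
  A2 : forall (n : int) (x : hh n), cohomologous (Rop n x) (chrep ch n (Iop n x));
  (* (A3) exactness at Omega^{n}/Im d : ker a = image of ch (mod exact) *)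
  A3_a : forall (n : int) (w : Om C n),
     aop n w = 0 <-> exists y : h n, cohomologous w (chrep ch n y);
  (* (A3) exactness at hat h : ker I = image of a *)
  A3_I : forall (n : int) (x : hh (n + 1)),
     Iop (n + 1) x = 0 <-> exists w : Om C n, x = aop n w;
  A3_surj : forall (n : int) (y : h n), exists x : hh n, Iop n x = y
}.
Arguments hh {C h ch}.
Arguments Iop {C h ch}.
Arguments Rop {C h ch}.
Arguments aop {C h ch}.


Definition Omega_ch (C : relComplex) (h : int -> zmodType) (ch : chernChar C h)
    (n : int) (w : Om C n) : Prop :=
  closedf w /\ exists y : h n, cohomologous w (chrep ch n y).
Arguments Omega_ch {C h} ch {n}.

Definition flat (C : relComplex) (h : int -> zmodType) (ch : chernChar C h)
    (E : relDiffExt C h ch) (n : int) (x : hh E n) : Prop :=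
  Rop E n x = 0.
Arguments flat {C h ch E n}.

(* The curvature R x of a class x is closed and, by (A2), cohomologous to
   ch(I x); so it lies in Omega_ch.  Conversely, if w is closed with
   [w] = ch(y), lift y to a class x (I is onto); then w - R x is exact, say
   d b, and by (A1) R(x + a b) = R x + d b = w. *)
From HB Require Import structures.
From mathcomp Require Import all_boot all_order all_algebra.
Import GRing.Theory.
Local Open Scope ring_scope.

#[local] Arguments Rop_closed {C h ch} r {n}.
#[local] Arguments A1 {C h ch} r {n}.
#[local] Arguments A2 {C h ch} r {n}.
#[local] Arguments A3_surj {C h ch} r {n}.

Section ExactForms.

Variable C : relComplex.

Lemma exactfN {n : int} {w : Om C n} : exactf w -> exactf (- w).
Proof.
move=> [m [e [b ->]]]; subst n.
by exists m, erefl, (- b); rewrite /= raddfN.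
Qed.

Lemma exactfB {n : int} {w1 w2 : Om C n} :
  exactf w1 -> exactf w2 -> exactf (w1 - w2).
Proof.
move=> [m1 [e1 [b1 ->]]] [m2 [e2 [b2 ->]]]; subst n.
have Em : m2 = m1 by apply: (addIr 1).
subst m2; rewrite (eq_irrelevance e2 erefl).
by exists m1, erefl, (b1 - b2); rewrite /= raddfB.
Qed.

Lemma cohomologous_sym {n : int} {w1 w2 : Om C n} :
  cohomologous w1 w2 -> cohomologous w2 w1.
Proof. by move/exactfN; rewrite opprB. Qed.

Lemma cohomologous_trans {n : int} {w1 w2 w3 : Om C n} :
  cohomologous w1 w2 -> cohomologous w2 w3 -> cohomologous w1 w3.
Proof.
move=> c12 /exactfN c23; have := exactfB c12 c23.
by rewrite opprK addrA subrK.
Qed.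

End ExactForms.

Section Curvature.

Variables (C : relComplex) (h : int -> zmodType) (ch : chernChar C h).
Variable E : relDiffExt C h ch.

Lemma Rop_Omega_ch (n : int) (x : hh E n) : Omega_ch ch (Rop E n x).
Proof.
split; first exact: Rop_closed.
by exists (Iop E n x); apply: A2.
Qed.

Lemma exactf_Rop_image {n : int} {w : Om C n} :
  exactf w -> exists x : hh E n, Rop E n x = w.
Proof. by move=> [m [e [b ->]]]; subst n; exists (aop E m b); rewrite A1. Qed.

Lemma Omega_ch_Rop_image (n : int) (w : Om C n) :
  Omega_ch ch w -> exists x : hh E n, Rop E n x = w.
Proof.
move=> [_ [y w_ch_y]].
have [x Ix] := A3_surj E y.
have w_Rx : cohomologous w (Rop E n x).
  apply: cohomologous_trans w_ch_y _; apply: cohomologous_sym.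
  by rewrite -Ix; apply: A2.
have [z Rz] := exactf_Rop_image w_Rx.
by exists (x + z); rewrite raddfD Rz addrC subrK.
Qed.

End Curvature.

Theorem lemma2p4 (C : relComplex) (h : int -> zmodType) (ch : chernChar C h)
    (E : relDiffExt C h ch) (n : int) :
  (* image of R is exactly Omega_ch *)
  (forall w : Om C n, (exists x : hh E n, Rop E n x = w) <-> Omega_ch ch w) /\
  (* exactness of 0 -> hat h_fl -> hat h --R--> Omega_ch -> 0 :
     R lands in Omega_ch, its kernel is the flat part, and it is onto Omega_ch *)
  (forall x : hh E n, Omega_ch ch (Rop E n x)) /\
  (forall x : hh E n, flat x <-> Rop E n x = 0) /\
  (forall w : Om C n, Omega_ch ch w -> exists x : hh E n, Rop E n x = w).
Proof.
have R_onto := @Omega_ch_Rop_image C h ch E n.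
split; last by split; [exact: Rop_Omega_ch | split].
by move=> w; split; [move=> [x <-]; apply: Rop_Omega_ch | apply: R_onto].
Qed.
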